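(* Let $X=L^\infty(\mathcal P)$ and assume that the family of all nonconstant rectifiable curves in $\mathcal P$ has zero $L^\infty$-modulus. Then $N^{1,\infty}(\mathcal P)=L^\infty(\mathcal P)$ and: (I) for every $E\subset\mathcal P$, $C_\infty(E)=0$ if $\mu(E)=0$ and $C_\infty(E)=1$ if $\mu(E)>0$; (II) if $A\subset\mathcal P$ is nonempty with $\mu(A)=0$, then $\chi_A\in N^{1,\infty}(\mathcal P)$ is weakly quasicontinuous but not quasicontinuous (so not every weakly quasicontinuous function is quasicontinuous); (III) if there is a closed set $F\subset\mathcal P$ with empty interior and $\mu(F)>0$, then $\chi_F\in N^{1,\infty}(\mathcal P)$ is not weakly quasicontinuous. Moreover, each of the following statements is equivalent to $\mu(\{x\})>0$ for every $x\in\mathcal P$: $C_\infty$ is an outer capacity; $C_\infty$ is a quasiouter capacity; every weakly quasicontinuous $u:\mathcal P\to[-\infty,\infty]$ is quasicontinuous; $C_\infty$ is an outer capacity for sets of zero capacity; $C_\infty(E)>0$ for every nonempty $E\subset\mathcal P$.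
   Context: Standing assumptions: $\mathcal P=(\mathcal P,d,\mu)$ is a metric space with a positive complete Borel measure $\mu$ such that $0<\mu(B)<\infty$ for every ball $B$; $\mu$ is extended as an outer measure to all subsets. $L^\infty(\mathcal P)$ is regarded as a space of everywhere-defined measurable functions with the (semi)norm $\|\cdot\|_{L^\infty}$. A family $\Gamma$ of curves has zero $L^\infty$-modulus if there is a Borel $\rho\in L^\infty(\mathcal P)$ with $\int_\gamma\rho\,ds=\infty$ for every $\gamma\in\Gamma$. A Borel $g:\mathcal P\to[0,\infty]$ is an upper gradient of $u:\mathcal P\to[-\infty,\infty]$ if $|u(\gamma(0))-u(\gamma(l_\gamma))|\le\int_\gamma g\,ds$ for every nonconstant rectifiable (arc-length parametrized) curve $\gamma:[0,l_\gamma]\to\mathcal P$. $N^{1,\infty}(\mathcal P)=\{u\in L^\infty:\|u\|_{N^{1,\infty}}:=\|u\|_{L^\infty}+\inf_g\|g\|_{L^\infty}<\infty\}$. $C_\infty(E)=\inf\{\|u\|_{N^{1,\infty}}:u\in N^{1,\infty},\ u\ge1\text{ on }E\}$. $C_\infty$ is a $c$-quasiouter capacity if $\inf\{C_\infty(G):G\supset E\text{ open}\}\le cC_\infty(E)$ for all $E$; quasiouter if for some $c\ge1$; outer if $c=1$; outer for sets of zero capacity if whenever $C_\infty(E)=0$ and $\varepsilon>0$ there is an open $G\supset E$ with $C_\infty(G)<\varepsilon$. $u$ is weakly quasicontinuous if for every $\varepsilon>0$ there is $E$ with $C_\infty(E)<\varepsilon$ and $u|_{\mathcal P\setminus E}$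 (real-valued) continuous; quasicontinuous if $E$ can be chosen open. *)

From HB Require Import structures.
From mathcomp Require Import all_boot all_order all_algebra.
From mathcomp Require Import all_classical all_reals all_analysis.
From mathcomp Require Import measurable_realfun ess_sup_inf.
Set Implicit Arguments.
Unset Strict Implicit.
Unset Printing Implicit Defensive.
Import Order.TTheory GRing.Theory Num.Theory.
Import numFieldNormedType.Exports.
Local Open Scope classical_set_scope.
Local Open Scope ring_scope.

Section mms.
Context {R : realType} {d0 : measure_display} {T : measurableType d0}.
Variable dist : T -> T -> R.
Variable mu : {measure set T -> \bar R}.

Definition dball (x : T) (r : R) : set T := [set y | dist x y < r].
Definition d_open (U : set T) : Prop :=
  forall x, U x -> exists2 r : R, 0 < r & dball x r `<=` U.
Definition d_closed (F : set T) : Prop := d_open (~` F).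
Definition d_borel : set (set T) := <<s d_open >>.
Definition borel_fun (f : T -> \bar R) : Prop :=
  forall B : set (\bar R), measurable B -> d_borel (f @^-1` B).

Definition metric_measure_space : Prop :=
  [/\ [/\ (forall x y, dist x y = 0 <-> x = y),
         (forall x y, dist x y = dist y x) &
         (forall x y z, dist x z <= dist x y + dist y z)],
      d_borel `<=` measurable,
      measure_is_complete mu &
      (forall x r, 0 < r -> (0 < mu (dball x r))%E /\ (mu (dball x r) < +oo)%E)].

Definition mu_out (E : set T) : \bar R :=
  ereal_inf [set mu A | A in [set A | measurable A /\ E `<=` A]].

Definition curve_length (gamma : R -> T) (a b : R) : \bar R :=
  ereal_sup [set l | exists (n : nat) (t : nat -> R),
     [/\ t 0%N = a, t n = b, (forall i, (i < n)%N -> t i <= t i.+1) &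
         l = (\sum_(i < n) dist (gamma (t i)) (gamma (t i.+1)))%:E]].

(** gamma : [0,l] -> T is a nonconstant rectifiable curve parametrized by
    arc length (values of gamma outside [0,l] are irrelevant) *)
Definition arclength_curve (gamma : R -> T) (l : R) : Prop :=
  0 < l /\ forall s t, 0 <= s -> s <= t -> t <= l ->
    curve_length gamma s t = (t - s)%:E.

Definition line_integral (gamma : R -> T) (l : R) (rho : T -> \bar R) : \bar R :=
  (\int[@lebesgue_measure R]_(t in [set t : R | (0 <= t <= l)%R]) rho (gamma t))%E.

Definition Linf_norm (u : T -> \bar R) : \bar R := ess_sup mu (fun x => `|u x|%E).
Definition in_Linf (u : T -> \bar R) : Prop :=
  measurable_fun [set: T] u /\ (Linf_norm u < +oo)%E.

(** zero L^infty-modulus of a family of curves (given as a predicate on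
    pairs (gamma, l)) *)
Definition Linf_modulus_zero (Gamma : (R -> T) -> R -> Prop) : Prop :=
  exists rho : T -> \bar R,
    [/\ borel_fun rho, (forall x, (0 <= rho x)%E), in_Linf rho &
        forall gamma l, Gamma gamma l -> line_integral gamma l rho = +oo%E].

(** upper gradients (with the usual convention that the integral must be
    infinite when one of the endpoint values is infinite) *)
Definition upper_gradient (u g : T -> \bar R) : Prop :=
  [/\ borel_fun g, (forall x, (0 <= g x)%E) &
      forall gamma l, arclength_curve gamma l ->
        let a := u (gamma 0) in let b := u (gamma l) in
        ((a \is a fin_num) && (b \is a fin_num) ->
           (`|fine a - fine b|%:E <= line_integral gamma l g)%E) /\
        (~~ ((a \is a fin_num) && (b \is a fin_num)) ->
           line_integral gamma l g = +oo%E)].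

Definition N1inf_norm (u : T -> \bar R) : \bar R :=
  (Linf_norm u + ereal_inf [set Linf_norm g | g in upper_gradient u])%E.
Definition in_N1inf (u : T -> \bar R) : Prop :=
  in_Linf u /\ (N1inf_norm u < +oo)%E.

Definition Cinf (E : set T) : \bar R :=
  ereal_inf [set N1inf_norm u |
             u in [set u | in_N1inf u /\ forall x, E x -> (1 <= u x)%E]].

Definition cont_off (E : set T) (u : T -> \bar R) : Prop :=
  (forall x, ~ E x -> u x \is a fin_num) /\
  forall x, ~ E x -> forall eps : R, 0 < eps -> exists2 delta : R, 0 < delta &
     forall y, ~ E y -> dist x y < delta -> `|fine (u y) - fine (u x)| < eps.

Definition weakly_quasicontinuous (u : T -> \bar R) : Prop :=
  forall eps : R, 0 < eps -> exists E, (Cinf E < eps%:E)%E /\ cont_off E u.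
Definition quasicontinuous (u : T -> \bar R) : Prop :=
  forall eps : R, 0 < eps -> exists E,
    [/\ d_open E, (Cinf E < eps%:E)%E & cont_off E u].

Definition c_quasiouter (c : R) : Prop :=
  forall E, (ereal_inf [set Cinf G | G in [set G | d_open G /\ E `<=` G]]
             <= c%:E * Cinf E)%E.
Definition quasiouter : Prop := exists2 c : R, 1 <= c & c_quasiouter c.
Definition outer_capacity : Prop := c_quasiouter 1.
Definition outer_for_zero_sets : Prop :=
  forall E, Cinf E = 0%E -> forall eps : R, 0 < eps ->
    exists G, [/\ d_open G, E `<=` G & (Cinf G < eps%:E)%E].

End mms.

Definition indicator_e {R : realType} {T : Type} (A : set T) : T -> \bar R :=
  fun x => (\1_A x : R)%:E.

From HB Require Import structures.
From mathcomp Require Import all_boot all_order all_algebra.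
From mathcomp Require Import all_classical all_reals all_analysis.
From mathcomp Require Import measurable_realfun ess_sup_inf.

Set Implicit Arguments.
Unset Strict Implicit.
Unset Printing Implicit Defensive.
Import Order.TTheory GRing.Theory Num.Theory.
Local Open Scope classical_set_scope.
Local Open Scope ring_scope.

(** Zero modulus of all curves yields a bounded Borel [rho] with infinite
    integral along every curve; every positive multiple of [rho] is then an
    upper gradient of every function, so the gradient part of the Newtonian
    norm vanishes and ||u||_{N^{1,oo}} = ||u||_{L^oo}.  Consequently C_oo(E)
    is 0 or 1 according as E is null or not.  Since nonempty open sets have
    positive measure, an open set of capacity < 1 is empty: quasicontinuity
    then means genuine continuity, which fails for characteristic functions
    of nonempty null sets and of closed nowhere dense sets of positive
    measure, while weak quasicontinuity only sees u off a null set.  All the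
    listed properties of C_oo thus reduce to: no singleton is null. *)

Section metric_topology.
Context {R : realType} {d0 : measure_display} {T : measurableType d0}.
Variable dist : T -> T -> R.

Lemma d_openT : d_open dist setT.
Proof. by move=> x _; exists 1. Qed.

Lemma d_openI U V : d_open dist U -> d_open dist V -> d_open dist (U `&` V).
Proof.
move=> hU hV x [Ux Vx].
have [r1 r10 h1] := hU x Ux; have [r2 r20 h2] := hV x Vx.
exists (Order.min r1 r2); first by rewrite lt_min r10 r20.
move=> y; rewrite /dball /= lt_min => /andP[y1 y2].
by split; [apply: h1 | apply: h2].
Qed.

Hypothesis dist_triangle : forall x y z, dist x z <= dist x y + dist y z.

Lemma dball_open x r : d_open dist (dball dist x r).
Proof.
move=> y; rewrite /dball /= => hy.
exists (r - dist x y); first by rewrite subr_gt0.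
move=> z; rewrite /dball /= => hz.
by apply: (le_lt_trans (dist_triangle x y z)); rewrite -ltrBrDl.
Qed.

End metric_topology.

Section outer_measure.
Context {R : realType} {d0 : measure_display} {T : measurableType d0}.
Variable mu : {measure set T -> \bar R}.
Local Open Scope ereal_scope.

Lemma mu_out_ge0 E : 0 <= mu_out mu E.
Proof. by apply: le_ereal_inf_tmp => _ [A _ <-]; exact: measure_ge0. Qed.

Lemma negligible_mu_out0 E : mu.-negligible E <-> mu_out mu E = 0.
Proof.
split.
  move=> [A [mA A0 EA]]; apply/eqP; rewrite eq_le mu_out_ge0 andbT.
  by apply: ge_ereal_inf; exists 0 => //; exists A.
move=> E0.
have small n : exists A, [/\ measurable A, E `<=` A & mu A < (n.+1%:R^-1)%:E].
  have : mu_out mu E < (n.+1%:R^-1 : R)%:E by rewrite E0 lte_fin invr_gt0.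
  by move/ereal_inf_lt => [_ [A [mA EA] <-] hA]; exists A.
have [F hF] := choice small.
have mF n : measurable (F n) by case: (hF n).
exists (\bigcap_n F n); split.
- exact: bigcapT_measurable.
- apply/eqP; rewrite eq_le measure_ge0 andbT; apply/lee_addgt0Pr => e e0.
  rewrite add0e; set n := Num.Def.truncn e^-1.
  have [_ _ Fn_small] := hF n.
  apply: le_trans (le_measure mu _ _ _) (ltW (lt_le_trans Fn_small _)).
  + by rewrite inE; exact: bigcapT_measurable.
  + by rewrite inE.
  + exact: bigcap_inf.
  + rewrite lee_fin -[leRHS]invrK lef_pV2 ?posrE ?invr_gt0//.
    exact: ltW (truncnS_gt _).
- by move=> x Ex n _; have [_ /(_ x Ex)] := hF n.
Qed.

Lemma mu_out_gt0 E : 0 < mu_out mu E <-> ~ mu.-negligible E.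
Proof.
rewrite negligible_mu_out0 lt0e mu_out_ge0 andbT.
by split => [/eqP|h]; last apply/eqP.
Qed.

Lemma exists_notin_negligible F E :
  ~ mu.-negligible F -> mu.-negligible E -> exists x, F x /\ ~ E x.
Proof.
move=> nF nE; apply: contrapT => noF; apply/nF/(negligibleS _ nE) => x Fx.
by apply: contrapT => nEx; apply: noF; exists x.
Qed.

End outer_measure.

Section essential_sup.
Context {R : realType} {d0 : measure_display} {T : measurableType d0}.
Variable mu : {measure set T -> \bar R}.
Local Open Scope ereal_scope.

Lemma Linf_norm_ge0 u : 0 < mu setT -> 0 <= Linf_norm mu u.
Proof.
by move=> muT; apply: ess_sup_gee => //; apply: aeW => x; exact: abse_ge0.
Qed.

Lemma Linf_norm_lt_negligible u c E : Linf_norm mu u < c ->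
  (forall x, E x -> c <= `|u x|) -> mu.-negligible E.
Proof.
move=> uc hE; apply: negligibleS (ess_sup_ge mu (fun x => `|u x|)) => x Ex /= ux.
by have := le_lt_trans ux uc; rewrite ltNge hE.
Qed.

Lemma Linf_norm_bounded u c : (forall x, `|u x| <= c) -> Linf_norm mu u <= c.
Proof. by move=> uc; apply/ess_supP; exact: aeW. Qed.

Lemma Linf_norm_le0 u N : mu.-negligible N -> (forall x, ~ N x -> u x = 0) ->
  Linf_norm mu u <= 0.
Proof.
move=> hN u0; apply/ess_supP; apply: negligibleS hN => x /= ux.
by apply: contrapT => Nx; apply: ux; rewrite u0 // abse0.
Qed.

Lemma in_Linf_indicator A : measurable A -> in_Linf mu (indicator_e A).
Proof.
move=> mA; split; first by apply/measurable_EFinP; exact: measurable_indic.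
apply: (le_lt_trans _ (ltry 1)); apply: Linf_norm_bounded => x.
by rewrite /indicator_e indicE; case: (x \in A); rewrite lee_fin ?normr1 ?normr0.
Qed.

End essential_sup.

Section indicator_continuity.
Context {R : realType} {d0 : measure_display} {T : measurableType d0}.
Variable dist : T -> T -> R.

Lemma fine_indicator_jump (A : set T) x y : A x -> ~ A y ->
  (`|fine (indicator_e A y : \bar R) - fine (indicator_e A x)| = 1)%R.
Proof.
by move=> Ax nAy; rewrite /= !indicE memNset // mem_set // sub0r normrN normr1.
Qed.

Lemma cont_off_indicatorC (A : set T) : cont_off dist A (indicator_e A).
Proof.
split=> // x nAx e e0; exists 1%R => // y nAy _.
by rewrite /= !indicE !memNset // subrr normr0.
Qed.

Lemma cont_off_indicator_ball E A x : cont_off dist E (indicator_e A) ->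
  ~ E x -> A x -> exists2 r : R, (0 < r)%R & dball dist x r `\` E `<=` A.
Proof.
move=> [_ cont] nEx Ax; have [r r0 hr] := cont x nEx 1%R ltr01.
exists r => // y [xy nEy]; apply: contrapT => nAy.
by have := hr y nEy xy; rewrite fine_indicator_jump // ltxx.
Qed.

End indicator_continuity.

Section line_integral.
Context {R : realType} {d0 : measure_display} {T : measurableType d0}.
Local Open Scope ereal_scope.

Lemma line_integral_scale (gamma : R -> T) l (f : T -> \bar R) (k : R) :
  (0 < k)%R -> (forall x, 0 <= f x) -> line_integral gamma l f = +oo ->
  line_integral gamma l (fun x => k%:E * f x) = +oo.
Proof.
move=> k0 f0; rewrite /line_integral !ge0_integralE; last 2 first.
- by move=> t _; rewrite mule_ge0 // lee_fin ltW.
- by move=> t _; exact: f0.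
move=> f_oo; apply/eqP; rewrite eq_le leey /=.
rewrite -(gt0_mulye (x := k%:E)) ?lte_fin // muleC -f_oo -ereal_sup_pZl //.
apply: ereal_sup_le => _ [_ [g hg <-] <-].
exists (scale_nnsfun g (ltW k0)); last by rewrite -sintegralrM.
move=> t /=; have := hg t; rewrite /patch; case: ifPn => _ gt.
  by rewrite EFinM lee_pmul2l // lte_fin.
by move: gt; rewrite [point]/= !lee_fin => gt; rewrite pmulr_rle0.
Qed.

End line_integral.

Section metric_measure_space.
Context {R : realType} {d0 : measure_display} {T : measurableType d0}.
Variables (dist : T -> T -> R) (mu : {measure set T -> \bar R}).
Hypothesis hmms : metric_measure_space dist mu.

Lemma dist_xx x : dist x x = 0.
Proof. by case: hmms => -[h _ _] _ _ _; apply/h. Qed.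

Lemma mms_dball_open x r : d_open dist (dball dist x r).
Proof. by apply: dball_open; case: hmms => -[]. Qed.

Lemma d_open_measurable U : d_open dist U -> measurable U.
Proof. by case: hmms => _ hB _ _ hU; apply: hB; exact: sub_sigma_algebra. Qed.

Lemma d_open_not_negligible U x : d_open dist U -> U x -> ~ mu.-negligible U.
Proof.
move=> hU Ux [A [mA A0 UA]].
have [r r0 hr] := hU x Ux.
have [_ _ _ /(_ x r r0) [ball_gt0 _]] := hmms.
have := le_measure mu (x := dball dist x r) (y := A).
have mball := d_open_measurable (@mms_dball_open x r).
rewrite !inE => /(_ mball mA (subset_trans hr UA)).
move=> /(lt_le_trans ball_gt0) A_gt0; move/eqP: A0; by rewrite eq_le leNgt A_gt0.
Qed.

Lemma negligible_open_empty E :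
  mu.-negligible E -> d_open dist E -> forall x, ~ E x.
Proof. by move=> nE oE x Ex; exact: d_open_not_negligible oE Ex nE. Qed.

Lemma setT_not_negligible : ~ mu.-negligible setT.
Proof. exact: (@d_open_not_negligible setT point (@d_openT _ _ _ dist)). Qed.

Lemma measureT_gt0 : (0 < mu setT)%E.
Proof.
rewrite lt0e measure_ge0 andbT; apply/negP => /eqP muT0.
by apply: setT_not_negligible; exists setT; split => //; rewrite muT0.
Qed.

Lemma negligible_measurable A : mu.-negligible A -> measurable A.
Proof. by case: hmms => _ _ complete _; exact: complete. Qed.

Lemma d_closed_measurable F : d_closed dist F -> measurable F.
Proof. by move=> cF; rewrite -[F]setCK; exact/measurableC/d_open_measurable. Qed.

Section upper_gradients.
Local Open Scope ereal_scope.
Variable rho : T -> \bar R.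
Hypotheses (rho_borel : borel_fun dist rho) (rho_ge0 : forall x, 0 <= rho x)
  (rho_Linf : in_Linf mu rho)
  (rho_curves : forall gamma l, arclength_curve dist gamma l ->
     line_integral gamma l rho = +oo).

Lemma upper_gradient_scale u (k : R) : (0 < k)%R ->
  upper_gradient dist u (fun x => k%:E * rho x).
Proof.
move=> k0; have k_rho_curves gamma l : arclength_curve dist gamma l ->
    line_integral gamma l (fun x => k%:E * rho x) = +oo.
  by move=> hg; apply: line_integral_scale => //; exact: rho_curves.
split.
- move=> B mB.
  have := @measurable_funeM _ (\bar R) R setT id k%:E (@measurable_id _ _ setT).
  by move=> /(_ measurableT B mB); rewrite setTI => /rho_borel.
- by move=> x; rewrite mule_ge0 // lee_fin ltW.
- by move=> gamma l hg /=; split=> _; rewrite k_rho_curves // ?leey.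
Qed.

Lemma upper_gradient_Linf_norm_inf0 u :
  ereal_inf [set Linf_norm mu g | g in upper_gradient dist u] = 0.
Proof.
apply/eqP; rewrite eq_le; apply/andP; split; last first.
  by apply: le_ereal_inf_tmp => _ [g _ <-]; exact: Linf_norm_ge0 _ measureT_gt0.
have rho_fin : Linf_norm mu rho \is a fin_num.
  case: rho_Linf => _ rho_lt; rewrite fin_numElt rho_lt andbT.
  exact: lt_le_trans (ltNyr 0%R) (Linf_norm_ge0 _ measureT_gt0).
apply/lee_addgt0Pr => e e0; rewrite add0e.
set r := fine (Linf_norm mu rho).
have r0 : (0 <= r)%R by rewrite fine_ge0 // Linf_norm_ge0 // measureT_gt0.
set k := (e / (r + 1))%R.
have k0 : (0 < k)%R by rewrite divr_gt0 // ltr_wpDl.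
apply: ge_ereal_inf; exists (Linf_norm mu (fun x => k%:E * rho x)).
  by exists (fun x => k%:E * rho x) => //; exact: upper_gradient_scale.
have -> : Linf_norm mu (fun x => k%:E * rho x) = k%:E * Linf_norm mu rho.
  rewrite /Linf_norm -ess_sup_pZl //; congr ess_sup; apply/funext => x /=.
  by rewrite abseM gee0_abs // lee_fin ltW.
rewrite -(fineK rho_fin) -/r -EFinM lee_fin /k mulrAC ler_pdivrMr ?ltr_wpDl //.
by apply: ler_wpM2l; [exact: ltW | rewrite lerDl].
Qed.

End upper_gradients.

Hypothesis curves_modulus0 : Linf_modulus_zero dist mu (arclength_curve dist).

Lemma N1inf_normE u : N1inf_norm dist mu u = Linf_norm mu u.
Proof.
have [rho [rho_borel rho_ge0 rho_Linf rho_curves]] := curves_modulus0.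
have := upper_gradient_Linf_norm_inf0 rho_borel rho_ge0 rho_Linf rho_curves u.
by rewrite /N1inf_norm => ->; rewrite adde0.
Qed.

Lemma in_N1inf_Linf u : in_N1inf dist mu u <-> in_Linf mu u.
Proof.
by split=> [[]//|u_Linf]; split=> //; rewrite N1inf_normE; case: u_Linf.
Qed.

Lemma in_N1inf_indicator A : measurable A -> in_N1inf dist mu (indicator_e A).
Proof. by move=> mA; apply/in_N1inf_Linf; exact: in_Linf_indicator. Qed.

Local Open Scope ereal_scope.

Lemma Cinf_ge0 E : 0 <= Cinf dist mu E.
Proof.
apply: le_ereal_inf_tmp => _ [u _ <-].
by rewrite N1inf_normE Linf_norm_ge0 // measureT_gt0.
Qed.

Lemma Cinf_negligible E : mu.-negligible E -> Cinf dist mu E = 0.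
Proof.
move=> nE; have [A [mA A0 EA]] := nE.
apply/eqP; rewrite eq_le Cinf_ge0 andbT.
apply: ge_ereal_inf; exists (N1inf_norm dist mu (indicator_e A)).
  exists (indicator_e A) => //; split; first exact: in_N1inf_indicator.
  by move=> x /EA Ax; rewrite /indicator_e indicE mem_set.
have nA : mu.-negligible A by exists A; split.
rewrite N1inf_normE; apply: (Linf_norm_le0 nA) => x notA.
by rewrite /indicator_e indicE memNset.
Qed.

Lemma Cinf_not_negligible E : ~ mu.-negligible E -> Cinf dist mu E = 1.
Proof.
move=> nE; apply/eqP; rewrite eq_le; apply/andP; split.
  apply: ge_ereal_inf; exists (N1inf_norm dist mu (cst 1)).
    exists (cst 1) => //; split => //; apply/in_N1inf_Linf; split.
      exact: measurable_cst.
    apply: (le_lt_trans _ (ltry 1)); apply: Linf_norm_bounded => x.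
    by rewrite /= lee_fin normr1.
  rewrite N1inf_normE; apply: Linf_norm_bounded => x.
  by rewrite /= lee_fin normr1.
apply: le_ereal_inf_tmp => _ [u [_ uE] <-]; rewrite N1inf_normE leNgt.
apply/negP => u_lt1; apply: nE; apply: Linf_norm_lt_negligible u_lt1 _ => x Ex.
exact: le_trans (uE x Ex) (lee_abs _).
Qed.

Lemma Cinf_lt1_negligible E : Cinf dist mu E < 1 -> mu.-negligible E.
Proof. by apply: contraPP => nE; rewrite Cinf_not_negligible // ltxx. Qed.

Lemma Cinf0 : Cinf dist mu set0 = 0.
Proof. exact/Cinf_negligible/negligible_set0. Qed.

Lemma CinfT : Cinf dist mu setT = 1.
Proof. exact/Cinf_not_negligible/setT_not_negligible. Qed.

Lemma indicator_negligible_not_quasicontinuous A : A !=set0 ->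
  mu.-negligible A -> ~ quasicontinuous dist mu (indicator_e A).
Proof.
move=> [a Aa] nA qc; have [E [oE CE cE]] := qc 1%R ltr01.
have E0 := negligible_open_empty (Cinf_lt1_negligible CE) oE.
have [r r0 ballA] := cont_off_indicator_ball cE (E0 a) Aa.
apply: (@d_open_not_negligible _ a (@mms_dball_open a r)).
  by rewrite /dball /= dist_xx.
by apply: negligibleS nA => y ya; apply: ballA; split=> //; exact: E0.
Qed.

Lemma indicator_negligible_weakly_quasicontinuous A :
  mu.-negligible A -> weakly_quasicontinuous dist mu (indicator_e A).
Proof.
move=> nA e e0; exists A; split; last exact: cont_off_indicatorC.
by rewrite Cinf_negligible // lte_fin.
Qed.

Lemma indicator_nowhere_dense_not_weakly_quasicontinuous F : d_closed dist F ->
  (forall U, d_open dist U -> U `<=` F -> U = set0) -> ~ mu.-negligible F ->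
  ~ weakly_quasicontinuous dist mu (indicator_e F).
Proof.
move=> cF intF0 nF wqc; have [E [CE cE]] := wqc 1%R ltr01.
have nE := Cinf_lt1_negligible CE.
have [x [Fx nEx]] := exists_notin_negligible nF nE.
have [r r0 ballF] := cont_off_indicator_ball cE nEx Fx.
have ballFC_open : d_open dist (dball dist x r `&` ~` F).
  by apply: d_openI; [exact: mms_dball_open | exact: cF].
have ballFC_E : dball dist x r `&` ~` F `<=` E.
  by move=> y [xy nFy]; apply: contrapT => nEy; apply/nFy/ballF.
have ballFC0 := negligible_open_empty (negligibleS ballFC_E nE) ballFC_open.
have ball_F : dball dist x r `<=` F.
  by move=> y xy; apply: contrapT => nFy; exact: (ballFC0 y).
have : dball dist x r x by rewrite /dball /= dist_xx.
by rewrite (intF0 _ (@mms_dball_open x r) ball_F).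
Qed.

Lemma c_quasiouter_points_gt0 (c : R) : c_quasiouter dist mu c ->
  forall x, 0 < mu_out mu [set x].
Proof.
move=> outer x; apply/mu_out_gt0 => nx; have := outer [set x].
rewrite Cinf_negligible // mule0; apply/negP; rewrite -ltNge.
apply: (@lt_le_trans _ _ 1); first exact: lte01.
apply: le_ereal_inf_tmp => _ [G [oG xG] <-].
by rewrite Cinf_not_negligible //; exact: d_open_not_negligible oG (xG x erefl).
Qed.

Section positive_points.
Hypothesis points_gt0 : forall x, 0 < mu_out mu [set x].

Lemma negligible_eq0 E : mu.-negligible E -> E = set0.
Proof.
move=> nE; apply/seteqP; split=> // x Ex.
have /mu_out_gt0 := points_gt0 x; apply.
by apply: negligibleS nE => y ->.
Qed.

Lemma points_gt0_outer_capacity : outer_capacity dist mu.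
Proof.
move=> E; rewrite mul1e; apply: ge_ereal_inf; exists (Cinf dist mu E) => //.
have [/negligible_eq0 ->|nE] := pselect (mu.-negligible E).
  by exists set0; split.
by exists setT; [split=> //; exact: d_openT | rewrite CinfT Cinf_not_negligible].
Qed.

Lemma points_gt0_quasicontinuous u :
  weakly_quasicontinuous dist mu u -> quasicontinuous dist mu u.
Proof.
move=> wqc e e0; have [E [CE cE]] := wqc e e0.
have [/negligible_eq0 E0|nE] := pselect (mu.-negligible E).
  by exists E; split=> //; rewrite E0.
exists setT; split; first exact: d_openT.
  by rewrite CinfT -(Cinf_not_negligible nE).
by split=> x /(_ I).
Qed.

Lemma points_gt0_outer_for_zero_sets : outer_for_zero_sets dist mu.
Proof.
move=> E CE0 e e0; exists set0; split=> //; last by rewrite Cinf0 lte_fin.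
suff /negligible_eq0 -> : mu.-negligible E by [].
by apply: Cinf_lt1_negligible; rewrite CE0 lte01.
Qed.

Lemma points_gt0_Cinf_gt0 E : E !=set0 -> 0 < Cinf dist mu E.
Proof.
move=> [x Ex]; rewrite Cinf_not_negligible // => /negligible_eq0 E0.
by rewrite E0 in Ex.
Qed.

End positive_points.

Lemma quasicontinuous_points_gt0 :
  (forall u, weakly_quasicontinuous dist mu u -> quasicontinuous dist mu u) ->
  forall x, 0 < mu_out mu [set x].
Proof.
move=> wqc_qc x; apply/mu_out_gt0 => nx.
apply: (@indicator_negligible_not_quasicontinuous [set x]) => //.
  by exists x.
exact/wqc_qc/indicator_negligible_weakly_quasicontinuous.
Qed.

Lemma outer_for_zero_sets_points_gt0 :
  outer_for_zero_sets dist mu -> forall x, 0 < mu_out mu [set x].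
Proof.
move=> outer0 x; apply/mu_out_gt0 => nx.
have [G [oG xG]] := outer0 _ (Cinf_negligible nx) 1%R ltr01.
move=> /Cinf_lt1_negligible nG.
exact: d_open_not_negligible oG (xG x erefl) nG.
Qed.

Lemma Cinf_gt0_points_gt0 : (forall E, E !=set0 -> 0 < Cinf dist mu E) ->
  forall x, 0 < mu_out mu [set x].
Proof.
move=> Cinf_gt0 x; apply/mu_out_gt0 => nx.
by have := Cinf_gt0 [set x] (ex_intro _ x erefl); rewrite Cinf_negligible // ltxx.
Qed.

End metric_measure_space.

Theorem theorem6p2 (R : realType) (d0 : measure_display) (T : measurableType d0)
  (dist : T -> T -> R) (mu : {measure set T -> \bar R}) :
  metric_measure_space dist mu ->
  Linf_modulus_zero dist mu (arclength_curve dist) ->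
  [/\ (forall u : T -> \bar R, in_N1inf dist mu u <-> in_Linf mu u),
      (* (I) *)
      (forall E : set T,
         (mu_out mu E = 0%E -> Cinf dist mu E = 0%E) /\
         ((0 < mu_out mu E)%E -> Cinf dist mu E = 1%E)),
      (* (II) *)
      (forall A : set T, A !=set0 -> mu_out mu A = 0%E ->
         [/\ in_N1inf dist mu (indicator_e A),
             weakly_quasicontinuous dist mu (indicator_e A) &
             ~ quasicontinuous dist mu (indicator_e A)]),
      (* (III) *)
      (forall F : set T, d_closed dist F ->
         (forall U, d_open dist U -> U `<=` F -> U = set0) ->
         (0 < mu_out mu F)%E ->
         in_N1inf dist mu (indicator_e F) /\
         ~ weakly_quasicontinuous dist mu (indicator_e F)) &
      (* equivalences *)
      let P := forall x : T, (0 < mu_out mu [set x])%E in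
      [/\ P <-> outer_capacity dist mu,
          P <-> quasiouter dist mu,
          P <-> (forall u : T -> \bar R, weakly_quasicontinuous dist mu u ->
                                         quasicontinuous dist mu u),
          P <-> outer_for_zero_sets dist mu &
          P <-> (forall E : set T, E !=set0 -> (0 < Cinf dist mu E)%E)]].
Proof.
move=> hmms hmod; split.
- exact: in_N1inf_Linf.
- move=> E; split=> [/negligible_mu_out0|/mu_out_gt0].
    exact: Cinf_negligible.
  exact: Cinf_not_negligible.
- move=> A A0 /negligible_mu_out0 nA; split.
  + exact: (in_N1inf_indicator hmms hmod) (negligible_measurable hmms nA).
  + exact: indicator_negligible_weakly_quasicontinuous.
  + exact: indicator_negligible_not_quasicontinuous.
- move=> F cF intF0 /mu_out_gt0 nF; split.
  + exact: (in_N1inf_indicator hmms hmod) (d_closed_measurable hmms cF).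
  + exact: indicator_nowhere_dense_not_weakly_quasicontinuous.
move=> P; rewrite {}/P; split; split.
- exact: points_gt0_outer_capacity.
- exact: c_quasiouter_points_gt0.
- by move=> points_gt0; exists 1%R => //; exact: points_gt0_outer_capacity.
- by case=> c _ /c_quasiouter_points_gt0; apply.
- exact: points_gt0_quasicontinuous.
- exact: quasicontinuous_points_gt0.
- exact: points_gt0_outer_for_zero_sets.
- exact: outer_for_zero_sets_points_gt0.
- exact: points_gt0_Cinf_gt0.
- exact: Cinf_gt0_points_gt0.
Qed.
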